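(* Let $p$ be a prime, let $M$ be an elementary abelian $p$-group (written multiplicatively), and let $1\to \mathbb{Z}/p\to \hat M\to M\to 1$ be a Frattini extension of groups with kernel of order $p$ (so $\hat M$ is a $p$-group and the kernel is central). For $m\in M$ let $\hat m$ denote a lift of $m$ to $\hat M$. Let $V^0$ be the set of nonidentity $m\in M$ whose lifts to $\hat M$ have order $p$, and $V=V^0\cup\{1\}$. Let $m_1,m_2\in M$ with $\langle m_1,m_2\rangle$ of rank $2$, and let $\langle \hat m_1,\hat m_2\rangle$ be the subgroup of $\hat M$ generated by lifts of them. (i) If $m_1,m_2\in V$: when $p=2$, $\langle\hat m_1,\hat m_2\rangle$ is either a Klein $4$-group or the dihedral group $D_4$ of order $8$; when $p\ne 2$, it is either $(\mathbb{Z}/p)^2$, or $U_p$, or it is $H_p$ and the commutator $(\hat m_1,\hat m_2)$ generates the kernel of $\langle\hat m_1,\hat m_2\rangle\to\langle m_1,m_2\rangle$. (ii) If $m_1,m_2\in M\setminus V$: when $p=2$, $\langle\hat m_1,\hat m_2\rangle$ is either $\mathbb{Z}/4\times\mathbb{Z}/2$ or the quaternion group $Q_8$; when $p\ne 2$, it is either $\mathbb{Z}/p^2\times\mathbb{Z}/p$ or $U_p$. (iii) If $m_1\in V^0$ and $m_2\in M\setminus V$, then $\langle\hat m_1,\hat m_2\rangle$ is either $\mathbb{Z}/p^2\times\mathbb{Z}/p$ or $U_p$.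
   Context: $U_p=\mathbb{Z}/p^2\rtimes\mathbb{Z}/p$, where a generator of $\mathbb{Z}/p$ acts on $\mathbb{Z}/p^2$ by sending $1$ to $1+ap$ for some $a$ prime to $p$. $H_p$ is the Heisenberg group of order $p^3$ (unipotent upper triangular $3\times3$ matrices over $\mathbb{F}_p$). Since the kernel is central, $\hat m^p$ depends only on $m$. *)

From mathcomp Require Import all_boot all_algebra all_fingroup all_solvable.

Set Implicit Arguments.
Unset Strict Implicit.
Unset Printing Implicit Defensive.

Local Open Scope group_scope.

Definition V0 (gT rT : finGroupType) (Mhat : {group gT})
    (f : {morphism Mhat >-> rT}) (M : {set rT}) (p : nat) : {set rT} :=
  [set m in M | (m != 1) && [forall x in Mhat, (f x == m) ==> (#[x] == p)]].

Definition V (gT rT : finGroupType) (Mhat : {group gT})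
    (f : {morphism Mhat >-> rT}) (M : {set rT}) (p : nat) : {set rT} :=
  1 |: V0 f M p.

(* U_p = Z/p^2 ⋊ Z/p, a generator of Z/p acting on Z/p^2 by 1 |-> 1 + a p,
   a prime to p.  Extremal.gtype q p e is MathComp's semidirect product
   'Z_q ⋊ 'Z_p in which the generator 1 of 'Z_p conjugates 1 of 'Z_q to e. *)
Definition Up_type (p a : nat) : finGroupType :=
  Extremal.gtype (p ^ 2) p (1 + a * p).

Definition isog_Up (gT : finGroupType) (G : {set gT}) (p : nat) : Prop :=
  exists a : nat, coprime a p /\ G \isog [set: Up_type p a].

Definition Heis (p : nat) : {set {'GL_3['F_p]}} :=
  [set g : {'GL_3['F_p]} | [forall i : 'I_3, forall j : 'I_3,
      ((j < i)%N ==> (GLval g i j == 0%R)) && ((i == j) ==> (GLval g i j == 1%R))]].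

(* The kernel K of f has order p in the p-group Mhat, hence is central, so the
   p-th power map factors through M with values in K: lifts of elements of V^0
   have order p and lifts of elements outside V have order p^2.  The group L
   generated by two lifts maps onto a subgroup of order p^2, with kernel L ∩ K
   of order 1 or p; hence L is abelian of order p^2, or has order p^3 as soon
   as a generator has order p^2 or the generators do not commute.  Among the
   groups of order p^3 generated by two such elements, the orders of the
   generators single out Z/p^2 x Z/p, D_8, Q_8, the extraspecial group of
   exponent p (which is H_p) or the modular group U_p. *)

From mathcomp Require Import all_boot all_algebra all_fingroup all_solvable.
From mathcomp Require Import ring.

Set Implicit Arguments.
Unset Strict Implicit.
Unset Printing Implicit Defensive.

Import GRing.Theory.

Section Heisenberg.
Variable p : nat.
Hypothesis p_pr : prime p.
Local Open Scope ring_scope.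

Definition heis_mx (a b c : 'F_p) : 'M['F_p]_3 :=
  \matrix_(i < 3, j < 3)
    nth 0 (nth [::] [:: [:: 1; a; b]; [:: 0; 1; c]; [:: 0; 0; 1]] i) j.

Lemma heis_mxM a b c a' b' c' :
  heis_mx a b c *m heis_mx a' b' c' = heis_mx (a + a') (b + b' + a * c') (c + c').
Proof.
apply/matrixP=> i j; rewrite !mxE !big_ord_recl big_ord0 !mxE.
by case: i => [[|[|[|i]]] Hi] //; case: j => [[|[|[|j]]] Hj] //=; ring.
Qed.

Lemma heis_mx0 : heis_mx 0 0 0 = 1%:M.
Proof.
apply/matrixP=> i j; rewrite !mxE.
by case: i => [[|[|[|i]]] Hi] //; case: j => [[|[|[|j]]] Hj].
Qed.

Lemma heis_mx_unit a b c : heis_mx a b c \is a GRing.unit.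
Proof.
have [] // := @mulmx1_unit _ _ (heis_mx a b c) (heis_mx (- a) (a * c - b) (- c)).
by rewrite heis_mxM -heis_mx0; congr heis_mx; ring.
Qed.

Definition heis a b c : {'GL_3['F_p]} := FinRing.unit _ (heis_mx_unit a b c).

Lemma heisM a b c a' b' c' :
  (heis a b c * heis a' b' c')%g = heis (a + a') (b + b' + a * c') (c + c').
Proof. by apply: val_inj; rewrite /= -heis_mxM. Qed.

Lemma heis0 : heis 0 0 0 = 1%g.
Proof. by apply: val_inj; rewrite /= heis_mx0. Qed.

Lemma heis_inj a b c a' b' c' :
  heis a b c = heis a' b' c' -> [/\ a = a', b = b' & c = c'].
Proof.
move/(congr1 GLval) => /= E.
have e i j := congr1 (fun A : 'M_3 => A i j) E.
by move: (e 0 1) (e 0 2) (e 1 2); rewrite !mxE.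
Qed.

Lemma mem_Heis a b c : heis a b c \in Heis p.
Proof.
rewrite inE; apply/forallP=> i; apply/forallP=> j; rewrite /= mxE.
by case: i => [[|[|[|i]]] Hi] //; case: j => [[|[|[|j]]] Hj].
Qed.

Lemma HeisP g : g \in Heis p -> g = heis (GLval g 0 1) (GLval g 0 2) (GLval g 1 2).
Proof.
rewrite inE => /forallP Hg; apply: val_inj; apply/matrixP => i j.
have /forallP/(_ j)/andP[/implyP low /implyP diag] := Hg i.
rewrite /= mxE.
case: i low diag => [[|[|[|i]]] Hi] //; case: j => [[|[|[|j]]] Hj] //= low diag;
  try (by rewrite (eqP (low isT))); try (by rewrite (eqP (diag isT))).
all: by f_equal; apply: val_inj.
Qed.

Lemma Heis_group_set : group_set (Heis p).
Proof.
apply/group_setP; split; first by rewrite -heis0 mem_Heis.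
by move=> x y /HeisP -> /HeisP ->; rewrite heisM mem_Heis.
Qed.

Canonical Heis_group := Group Heis_group_set.

Lemma card_Heis : #|Heis p| = (p ^ 3)%N.
Proof.
have -> : Heis p = [set heis t.1.1 t.1.2 t.2 | t in [set: 'F_p * 'F_p * 'F_p]].
  apply/setP => g; apply/idP/imsetP => [/HeisP -> | [t _ ->]]; last exact: mem_Heis.
  by exists (GLval g 0 1, GLval g 0 2, GLval g 1 2).
rewrite card_imset; last by move=> [[a b] c] [[a' b'] c'] /heis_inj [/= -> -> ->].
by rewrite cardsT !card_prod card_Fp // !expnS expn0 muln1 mulnA.
Qed.

Lemma heisX a b c n : (heis a b c ^+ n)%g =
  heis (a *+ n) (b *+ n + (a * c) *+ 'C(n, 2)) (c *+ n).
Proof.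
elim: n => [|n IHn]; first by rewrite expg0 !mulr0n addr0 heis0.
rewrite expgSr IHn heisM binS bin1 !mulrSr mulrnDr; congr heis; rewrite mulrnAl; ring.
Qed.

Lemma exponent_Heis : odd p -> (exponent (Heis p) %| p)%N.
Proof.
move=> p_odd; have chp := pchar_Fp p_pr.
have mulrn_p0 (x : 'F_p) n : (p %| n)%N -> x *+ n = 0.
  by rewrite (dvdn_pcharf chp) -[x *+ n]mulr_natr => /eqP ->; rewrite mulr0.
have p_dvd_bin2 : (p %| 'C(p, 2))%N.
  by rewrite prime_dvd_bin //; case: p p_odd (prime_gt1 p_pr) => [|[|[|]]].
apply/exponentP => g /HeisP ->; rewrite heisX.
by rewrite !mulrn_p0 // addr0 heis0.
Qed.

Lemma Heis_nonabelian : ~~ abelian (Heis p).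
Proof.
apply/negP => /centsP/(_ (heis 1 0 0) (mem_Heis _ _ _) (heis 0 0 1) (mem_Heis _ _ _)).
rewrite /commute !heisM => /heis_inj [_ /eqP + _].
by rewrite mul1r mul0r !addr0 !add0r oner_eq0.
Qed.

Lemma Heis_isog_pX1p2 : odd p -> Heis p \isog p^{1+2}.
Proof.
move=> p_odd; have pH : (p.-group (Heis p))%g by rewrite /pgroup card_Heis pnatX pnat_id.
have esH : extraspecial (Heis p).
  by apply: (p3group_extraspecial pH Heis_nonabelian); rewrite card_Heis pfactorK.
exact: isog_pX1p2 esH (exponent_Heis p_odd) card_Heis.
Qed.

End Heisenberg.

Local Open Scope group_scope.

Section TwoGenerators.
Variable gT : finGroupType.
Implicit Types x y : gT.

Lemma gen2_joinE x y : <<[set x; y]>> = <[x]> <*> <[y]>.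
Proof. by rewrite /cycle joing_idl joing_idr. Qed.

Lemma abelian_gen2P x y : reflect (commute x y) (abelian <<[set x; y]>>).
Proof.
apply: (iffP idP) => [/centsP cxy | cxy].
  by apply: cxy; rewrite mem_gen // !inE eqxx ?orbT.
by rewrite gen2_joinE abelianY !cycle_abelian cents_cycle.
Qed.

Lemma gen2_mulVXr x y k : <<[set x; y * (x ^+ k)^-1]>> = <<[set x; y]>>.
Proof.
have gen_x z : x \in <<[set x; z]>> by rewrite mem_gen // !inE eqxx.
have gen_y z : z \in <<[set x; z]>> by rewrite mem_gen // !inE eqxx orbT.
apply/eqP; rewrite eqEsubset !gen_subG !subUset !sub1set !gen_x.
rewrite groupM ?groupV ?groupX ?gen_x ?gen_y //=.
by rewrite -[X in X \in _](mulgKV (x ^+ k)) groupM ?groupX ?gen_x ?gen_y.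
Qed.

Lemma rank2_gen_notin_cycle (a b : gT) : 'r(<<[set a; b]>>) = 2 -> b \notin <[a]>.
Proof.
move=> rk2; apply/negP => b_a; have : <<[set a; b]>> \subset <[a]>.
  by rewrite gen_subG subUset !sub1set cycle_id.
by move/rankS; rewrite rk2 rank_cycle; case: (a != 1).
Qed.

Lemma cycle_isog_Zp x n : 1 < n -> #[x] = n -> <[x]> \isog [set: 'Z_n].
Proof.
move=> n_gt1 ox; rewrite isog_cyclic_card ?cycle_cyclic // -orderE ox.
apply/andP; split; first by rewrite /= Zp_cycle cycle_cyclic.
by rewrite /= cardsT card_ord Zp_cast.
Qed.

Lemma commute_gen2_isog x y p n : prime p -> commute x y ->
  1 < n -> #[x] = n -> #[y] = p -> y \notin <[x]> ->
  <<[set x; y]>> \isog [set: ('Z_n * 'Z_p)%type].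
Proof.
move=> p_pr cxy n_gt1 ox oy y_x.
have tiXY : <[x]> :&: <[y]> = 1.
  by rewrite setIC prime_TIg ?cycle_subG // -orderE oy.
have defG : <[x]> \x <[y]> = <<[set x; y]>>.
  by rewrite dprodEY ?cents_cycle // gen2_joinE.
have -> : [set: ('Z_n * 'Z_p)%type] = setX [set: 'Z_n] [set: 'Z_p].
  by apply/setP => -[u v]; rewrite !inE.
apply: (isog_dprod defG (setX_dprod _ _)).
  by apply: isog_trans (cycle_isog_Zp n_gt1 ox) _; apply: isog_setX1.
by apply: isog_trans (cycle_isog_Zp (prime_gt1 p_pr) oy) _; apply: isog_set1X.
Qed.

(* Replacing y by y x^-k with y^p = x^(pk) produces a second generator of order p. *)
Lemma commute_gen2_isog_Zp2 x y p : prime p -> commute x y ->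
  #[x] = (p ^ 2)%N -> y ^+ p \in <[x ^+ p]> -> y \notin <[x]> ->
  <<[set x; y]>> \isog [set: ('Z_(p ^ 2) * 'Z_p)%type].
Proof.
move=> p_pr cxy ox /cycleP[k yp] y_x.
set z := y * (x ^+ k)^-1.
have cxz : commute x z by apply: commuteM => //; apply/commuteV/commuteX.
have z_x : z \notin <[x]> by rewrite groupMr ?groupV ?mem_cycle.
have zp : z ^+ p = 1.
  rewrite expgMn; last by apply/commuteV/commuteX/commute_sym.
  by rewrite yp expVgn -!expgM mulnC mulgV.
have oz : #[z] = p by apply: nt_prime_order => //; exact: group1_contra z_x.
rewrite -(gen2_mulVXr x y k) commute_gen2_isog //.
by rewrite -{1}(expn0 p) ltn_exp2l ?prime_gt1.
Qed.

Lemma order_sq_expg_neq1 x p : prime p -> #[x] = (p ^ 2)%N -> x ^+ p != 1.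
Proof.
by move=> p_pr ox; rewrite -order_dvdn ox -{2}(expn1 p) (dvdn_Pexp2l _ _ (prime_gt1 p_pr)).
Qed.

End TwoGenerators.

Section Extremal.
Variable gT : finGroupType.
Implicit Types (G : {group gT}) (x y : gT).

Lemma extraspecial_card8 G : #|G| = 8 -> ~~ abelian G -> extraspecial G.
Proof.
move=> oG nabG; have pG : 2.-group G by rewrite /pgroup oG.
by apply: (p3group_extraspecial pG nabG); rewrite oG.
Qed.

Lemma card8_isog_D8 G x y : #|G| = 8 -> ~~ abelian G ->
  x \in G -> #[x] = 4 -> y \in G :\: <[x]> -> #[y] = 2 -> G \isog 'D_8.
Proof.
move=> oG nabG Gx ox Gy oy.
have /orP[// | isoQ] := card_isog8_extraspecial oG (extraspecial_card8 oG nabG).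
have [[_ oGX _] _ _ _ _] := @quaternion_structure _ G 3 x y isT (And4 oG Gx ox Gy) isoQ.
by rewrite oGX in oy.
Qed.

Lemma card8_isog_Q8 G x y : #|G| = 8 -> ~~ abelian G ->
  x \in G -> #[x] = 4 -> y \in G :\: <[x]> -> #[y] = 4 -> G \isog 'Q_8.
Proof.
move=> oG nabG Gx ox Gy oy.
have /orP[isoD | //] := card_isog8_extraspecial oG (extraspecial_card8 oG nabG).
have [[_ oGX _] _ _ _ _] := @dihedral2_structure _ G 3 x y isT (And4 oG Gx ox Gy) isoD.
by rewrite oGX in oy.
Qed.

Lemma modular_gtype_p3 p : prime p -> modular_gtype (p ^ 3) = Up_type p 1.
Proof.
move=> p_pr; rewrite /modular_gtype /Up_type pdiv_pfactor //.
by rewrite !expnS !mulKn ?prime_gt0 // expn0 muln1 mul1n add1n.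
Qed.

Lemma card_p3_isog_Up G p x : prime p -> odd p -> #|G| = (p ^ 3)%N ->
  ~~ abelian G -> x \in G -> #[x] = (p ^ 2)%N -> isog_Up G p.
Proof.
move=> p_pr p_odd oG nabG Gx ox.
have pG : p.-group G by rewrite /pgroup oG pnatX pnat_id.
have iXG : #|G : <[x]>| = p.
  by rewrite -divgS ?cycle_subG // oG -orderE ox expnS mulnK // expn_gt0 prime_gt0.
have sXG : <[x]> \subset G by rewrite cycle_subG.
have := maximal_cycle_extremal pG nabG (cycle_cyclic x) sXG iXG.
have -> : (p == 2) = false by apply: contraTF p_odd => /eqP->.
rewrite orbF => /eqP/modular_group_classP[q q_pr [n n_ge3 isoG]].
have n_gt2 : 2 < n by apply: leq_trans n_ge3; rewrite leq_addl.
have := card_isog isoG; rewrite card_modular_group // => e.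
have q_p : q = p.
  have : (q %| p ^ 3)%N by rewrite -oG e -(subnKC n_gt2) expnS dvdn_mulr.
  by rewrite Euclid_dvdX // andbT dvdn_prime2 // => /eqP.
subst q; move/eqP: e; rewrite oG eqn_exp2l ?prime_gt1 // => /eqP n3.
rewrite -n3 in isoG.
by exists 1%N; rewrite coprime1n -modular_gtype_p3.
Qed.

(* 'D_8 is literally Extremal.gtype 4 2 3, that is Up_type 2 1. *)
Lemma isog_D8_Up G : G \isog 'D_8 -> isog_Up G 2.
Proof. by exists 1%N. Qed.

End Extremal.

Section CentralExtension.
Variables (p : nat) (gT rT : finGroupType) (Mhat : {group gT}) (M : {group rT}).
Variable f : {morphism Mhat >-> rT}.
Hypotheses (p_pr : prime p) (abelM : p.-abelem M) (imf : f @* Mhat = M).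
Hypothesis card_ker : #|'ker f| = p.

Lemma ext_pgroup : p.-group Mhat.
Proof.
have sKD : 'ker f \subset Mhat := normal_sub (ker_normal f).
have oMhat : #|Mhat| = (p * #|M|)%N.
  by rewrite -imf card_morphim setIid -card_ker -(LagrangeI Mhat ('ker f)) (setIidPr sKD).
by rewrite /pgroup oMhat pnatM pnat_id //; exact: abelem_pgroup abelM.
Qed.

Lemma ker_sub_center : 'ker f \subset 'Z(Mhat).
Proof.
apply: prime_meetG; first by rewrite card_ker.
apply: meet_center_nil (pgroup_nil ext_pgroup) (ker_normal f) _.
by rewrite -cardG_gt1 card_ker prime_gt1.
Qed.

Lemma expn_in_ker x : x \in Mhat -> x ^+ p \in 'ker f.
Proof.
move=> Dx; apply/kerP; rewrite ?groupX // morphX //.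
have Mfx : f x \in M by rewrite -imf mem_morphim.
have [-> | ntfx] := eqVneq (f x) 1; first exact: expg1n.
by rewrite -(abelem_order_p abelM Mfx ntfx) expg_order.
Qed.

(* Two lifts differ by a central element of order p. *)
Lemma expn_lift_eq x y : x \in Mhat -> y \in Mhat -> f x = f y -> x ^+ p = y ^+ p.
Proof.
move=> Dx Dy fxy; have Kyx : y^-1 * x \in 'ker f.
  by apply/kerP; rewrite ?groupM ?groupV // morphM ?groupV // morphV // fxy mulVg.
have cyx : commute y (y^-1 * x).
  by have /centerP[_ cK] := subsetP ker_sub_center _ Kyx; exact/commute_sym/cK.
by rewrite -{1}(mulKVg y x) expgMn // -card_ker (expg_cardG Kyx) mulg1.
Qed.

Lemma order_lift_V0 m x : m \in V0 f M p -> x \in Mhat -> f x = m -> #[x] = p.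
Proof.
rewrite inE => /and3P[_ _ /forall_inP lifts] Dx fxm.
by apply/eqP; have := lifts x Dx; rewrite fxm eqxx.
Qed.

Lemma order_lift_notV m x : m \in M :\: V f M p -> x \in Mhat -> f x = m ->
  #[x] = (p ^ 2)%N.
Proof.
case/setDP => Mm; rewrite !inE Mm negb_or negb_and /= => /andP[ntm].
rewrite ntm /= => /forall_inPn[y Dy]; rewrite negb_imply => /andP[/eqP fym oy] Dx fxm.
have xp : x ^+ p != 1.
  rewrite (expn_lift_eq Dx Dy) ?fxm ?fym //; apply: contra oy => /eqP yp1.
  by apply/eqP/nt_prime_order => //; apply: contraNneq ntm => y1; rewrite -fym y1 morph1.
have : (#[x] %| p ^ 2)%N.
  have := expg_cardG (expn_in_ker Dx); rewrite card_ker -expgM mulnn => x_p2.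
  by rewrite order_dvdn x_p2.
case/(dvdn_pfactor _ _ p_pr) => [[|[|[|j]]] // _ ox];
  by move: xp; rewrite -order_dvdn ox ?expn0 ?expn1 ?dvd1n ?dvdnn.
Qed.

Section TwoLifts.
Variables x1 x2 : gT.
Hypotheses (Dx1 : x1 \in Mhat) (Dx2 : x2 \in Mhat).
Hypothesis rank2 : 'r(<<[set f x1; f x2]>>) = 2.
Local Notation L := <<[set x1; x2]>>.

Let Lx1 : x1 \in L. Proof. by rewrite mem_gen // !inE eqxx. Qed.
Let Lx2 : x2 \in L. Proof. by rewrite mem_gen // !inE eqxx orbT. Qed.
Let sLD : L \subset Mhat. Proof. by rewrite gen_subG subUset !sub1set Dx1 Dx2. Qed.

Lemma lift2_notin_cycle : x2 \notin <[x1]>.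
Proof.
apply: contra (rank2_gen_notin_cycle rank2) => x1x2.
by rewrite -morphim_cycle // mem_morphim.
Qed.

Lemma lift1_notin_cycle : x1 \notin <[x2]>.
Proof.
have rank2' : 'r(<<[set f x2; f x1]>>) = 2 by rewrite setUC.
apply: contra (rank2_gen_notin_cycle rank2') => x2x1.
by rewrite -morphim_cycle // mem_morphim.
Qed.

Lemma card_gen_lifts : #|L| = (#|'ker_L f| * p ^ 2)%N.
Proof.
have fL : f @* L = <<[set f x1; f x2]>>.
  by rewrite morphim_gen ?subUset ?sub1set ?Dx1 ?Dx2 // morphimU !morphim_set1.
have abelfL : p.-abelem (f @* L) by apply: abelemS abelM; rewrite -imf morphimS.
have ofL : #|f @* L| = (p ^ 2)%N.
  have rfL : 'r(f @* L) = 2 by rewrite fL.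
  by rewrite (card_pgroup (abelem_pgroup abelfL)) -(rank_abelem abelfL) rfL.
by rewrite -ofL card_morphim (setIidPr sLD) LagrangeI.
Qed.

Lemma ker_gen_lifts_cycle y : y \in 'ker_L f -> y != 1 -> <[y]> = 'ker_L f.
Proof.
move=> KLy nty; have sKLK : 'ker_L f \subset 'ker f := subsetIr L _.
have oKL : #|'ker_L f| = p.
  have /primeP[_ /(_ #|'ker_L f|)] := p_pr; rewrite -{1}card_ker cardSg // => /(_ isT).
  case/orP=> /eqP // /card1_trivg KL1.
  by rewrite KL1 inE (negbTE nty) in KLy.
have oy : #[y] = p by apply: nt_prime_order => //; rewrite -oKL expg_cardG.
by apply/eqP; rewrite eqEcard cycle_subG KLy -orderE oy oKL /=.
Qed.

Lemma commg_lifts_in_ker : [~ x1, x2] \in 'ker_L f.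
Proof.
rewrite inE groupR //; apply/kerP; rewrite ?groupR // morphR //; apply/eqP/commgP.
have /centsP cM := abelem_abelian abelM.
by apply: cM; rewrite -imf mem_morphim.
Qed.

Lemma expn_lift_in_ker x : x \in L -> x ^+ p \in 'ker_L f.
Proof. by move=> Lx; rewrite inE groupX // expn_in_ker // (subsetP sLD). Qed.

Lemma card_gen_lifts_p3 y : y \in 'ker_L f -> y != 1 -> #|L| = (p ^ 3)%N.
Proof.
by move=> KLy nty; rewrite card_gen_lifts -(ker_gen_lifts_cycle KLy nty) -orderE
  (nt_prime_order p_pr _ nty) -?expnS // -card_ker expg_cardG // (subsetP (subsetIr L _)).
Qed.

Lemma gen_lifts_order_p (o1 : #[x1] = p) (o2 : #[x2] = p) :
  (p = 2 -> L \isog [set: ('Z_2 * 'Z_2)%type] \/ L \isog 'D_8)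
  /\ (p <> 2 ->
      L \isog [set: ('Z_p * 'Z_p)%type]
      \/ isog_Up L p
      \/ (L \isog Heis p /\ <[ [~ x1, x2] ]> = 'ker_L f)).
Proof.
have [c1 | ntc] := eqVneq [~ x1, x2] 1.
  have cx12 : commute x1 x2 by apply/commgP/eqP.
  have isoL := commute_gen2_isog p_pr cx12 (prime_gt1 p_pr) o1 o2 lift2_notin_cycle.
  by split=> [p2 | _]; left; rewrite // p2 in isoL.
have oL := card_gen_lifts_p3 commg_lifts_in_ker ntc.
have nabL : ~~ abelian L by apply: contra ntc => /abelian_gen2P/commgP.
have pL : p.-group L by rewrite /pgroup oL pnatX pnat_id.
split=> [p2 | p_neq2]; right.
  rewrite p2 in o1 o2 oL.
  have x12 : x1 != x2 by apply: contraNneq lift2_notin_cycle => <-; exact: cycle_id.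
  by have := involutions_gen_dihedral o1 o2 x12; rewrite oL.
have p_odd : odd p by case: (even_prime p_pr) => // /p_neq2.
have esL : extraspecial L by apply: (p3group_extraspecial pL nabL); rewrite oL pfactorK.
(* L is its own Ohm_1, and Ohm_1 has exponent p in class 2 for p odd. *)
have expL : (exponent L %| p)%N.
  have -> : L = 'Ohm_1(L).
    apply/eqP; rewrite eqEsubset Ohm_sub andbT (OhmE 1 pL) genS //.
    by rewrite subUset !sub1set !inE Lx1 Lx2 expn1 -!order_dvdn o1 o2 dvdnn.
  by rewrite exponent_Ohm1_class2 // nil_class2; have [[_ ->] _] := esL.
right; split.
  have isoL : L \isog p^{1+2} by apply: isog_pX1p2.
  by apply: isog_trans isoL _; rewrite isog_sym Heis_isog_pX1p2.
exact: ker_gen_lifts_cycle commg_lifts_in_ker ntc.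
Qed.

Lemma gen_lifts_order_p2 (o1 : #[x1] = (p ^ 2)%N) (o2 : #[x2] = (p ^ 2)%N) :
  (p = 2 -> L \isog [set: ('Z_4 * 'Z_2)%type] \/ L \isog 'Q_8)
  /\ (p <> 2 -> L \isog [set: ('Z_(p ^ 2) * 'Z_p)%type] \/ isog_Up L p).
Proof.
have KLx1p := expn_lift_in_ker Lx1; have ntx1p := order_sq_expg_neq1 p_pr o1.
have [abL | nabL] := boolP (abelian L).
  have x2p : x2 ^+ p \in <[x1 ^+ p]>.
    by rewrite (ker_gen_lifts_cycle KLx1p ntx1p) expn_lift_in_ker.
  have isoL := commute_gen2_isog_Zp2 p_pr (abelian_gen2P _ _ abL) o1 x2p lift2_notin_cycle.
  by split=> [p2 | _]; left; rewrite // p2 in isoL.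
have oL := card_gen_lifts_p3 KLx1p ntx1p.
split=> [p2 | p_neq2]; right.
  rewrite p2 in o1 o2 oL.
  by apply: card8_isog_Q8 oL nabL Lx1 o1 _ o2; rewrite inE lift2_notin_cycle.
have p_odd : odd p by case: (even_prime p_pr) => // /p_neq2.
exact: card_p3_isog_Up p_pr p_odd oL nabL Lx1 o1.
Qed.

Lemma gen_lifts_order_p_p2 (o1 : #[x1] = p) (o2 : #[x2] = (p ^ 2)%N) :
  L \isog [set: ('Z_(p ^ 2) * 'Z_p)%type] \/ isog_Up L p.
Proof.
have [abL | nabL] := boolP (abelian L).
  left; rewrite setUC commute_gen2_isog // ?lift1_notin_cycle //.
    by apply: commute_sym; apply/abelian_gen2P.
  by rewrite -{1}(expn0 p) ltn_exp2l ?prime_gt1.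
right; have oL := card_gen_lifts_p3 (expn_lift_in_ker Lx2) (order_sq_expg_neq1 p_pr o2).
have [p2 | p_odd] := even_prime p_pr; last exact: card_p3_isog_Up p_pr p_odd oL nabL Lx2 o2.
rewrite p2 in o1 o2 oL *; apply: isog_D8_Up.
by apply: card8_isog_D8 oL nabL Lx2 o2 _ o1; rewrite inE lift1_notin_cycle.
Qed.

End TwoLifts.

End CentralExtension.

Theorem lemma4p2 (p : nat) (gT rT : finGroupType) (Mhat : {group gT})
    (M : {group rT}) (f : {morphism Mhat >-> rT})
    (m1 m2 : rT) (x1 x2 : gT) :
  prime p ->
  p.-abelem M ->
  f @* Mhat = M ->
  #|'ker f| = p ->
  'ker f \subset 'Phi(Mhat) ->
  m1 \in M -> m2 \in M ->
  'r(<<[set m1; m2]>>) = 2 ->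
  x1 \in Mhat -> x2 \in Mhat -> f x1 = m1 -> f x2 = m2 ->
  let L := <<[set x1; x2]>> in
  (* (i) *)
  ((m1 \in V f M p) -> (m2 \in V f M p) ->
     (p = 2 -> L \isog [set: ('Z_2 * 'Z_2)%type] \/ L \isog 'D_8)
     /\ (p <> 2 ->
          L \isog [set: ('Z_p * 'Z_p)%type]
          \/ isog_Up L p
          \/ (L \isog Heis p /\ <[ [~ x1, x2] ]> = 'ker_L f)))
  /\
  (* (ii) *)
  ((m1 \in M :\: V f M p) -> (m2 \in M :\: V f M p) ->
     (p = 2 -> L \isog [set: ('Z_4 * 'Z_2)%type] \/ L \isog 'Q_8)
     /\ (p <> 2 -> L \isog [set: ('Z_(p ^ 2) * 'Z_p)%type] \/ isog_Up L p))
  /\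
  (* (iii) *)
  ((m1 \in V0 f M p) -> (m2 \in M :\: V f M p) ->
     L \isog [set: ('Z_(p ^ 2) * 'Z_p)%type] \/ isog_Up L p).
Proof.
move=> p_pr abelM imf card_ker _ _ _ rank2 Dx1 Dx2 fx1 fx2 L; subst m1 m2.
have ntf2 : f x2 != 1 := group1_contra (rank2_gen_notin_cycle rank2).
have rank2' : 'r(<<[set f x2; f x1]>>) = 2 by rewrite setUC.
have ntf1 : f x1 != 1 := group1_contra (rank2_gen_notin_cycle rank2').
have order_V x : x \in Mhat -> f x \in V f M p -> f x != 1 -> #[x] = p.
  move=> Dx; rewrite in_setU1 => /orP[/eqP -> | V0x _]; first by rewrite eqxx.
  exact: order_lift_V0 V0x Dx erefl.
have order_notV x : x \in Mhat -> f x \in M :\: V f M p -> #[x] = (p ^ 2)%N.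
  move=> Dx nVx; exact: (order_lift_notV p_pr abelM imf card_ker nVx Dx erefl).
split; [|split] => [Vx1 Vx2 | nVx1 nVx2 | V0x1 nVx2].
- apply: (gen_lifts_order_p p_pr abelM imf card_ker Dx1 Dx2 rank2).
    exact: order_V Dx1 Vx1 ntf1.
  exact: order_V Dx2 Vx2 ntf2.
- apply: (gen_lifts_order_p2 p_pr abelM imf card_ker Dx1 Dx2 rank2).
    exact: order_notV Dx1 nVx1.
  exact: order_notV Dx2 nVx2.
- apply: (gen_lifts_order_p_p2 p_pr abelM imf card_ker Dx1 Dx2 rank2).
    exact: order_lift_V0 V0x1 Dx1 erefl.
  exact: order_notV Dx2 nVx2.
Qed.
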